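(* In the standing setup, assume in addition $2f\le n$. Let $T$ be a valid partial table. Then there exist a valid partial table $T'$ whose row sets $S'_i$ satisfy $|S'_i|=|S_i|$ for every $i\in\{1,\dots,f\}$, and pairwise distinct columns $b_1,\dots,b_f\in\{1,\dots,n\}$, such that for every $i$ for which $S'_i$ is not a basis of $M$ we have $T'(i,b_i)=\emptyset$.
   Context: Standing setup: $M$ is a matroid of rank $n$ on ground set $E$; $f\le n$ is a positive integer; for each $i\in\{1,\dots,f\}$ and $j\in\{1,\dots,n\}$, $B_{i,j}$ is a basis of $M$, and the sets $B_{i,j}$ are pairwise disjoint. A valid partial table $T$ assigns to each position $(i,j)\in[f]\times[n]$ either the symbol $\emptyset$ (the position is empty) or an element $T(i,j)\in B_{i,j}$, such that for every row $i$ the set $S_i=\{T(i,j):T(i,j)\ne\emptyset\}$ is independent and for every column $j$ the set $C_j=\{T(i,j):T(i,j)\neq\emptyset\}$ is independent. *)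

From mathcomp Require Import all_boot.
Set Implicit Arguments. Unset Strict Implicit. Unset Printing Implicit Defensive.

Definition is_matroid (E : finType) (indep : pred {set E}) : Prop :=
  [/\ indep set0,
      (forall A B : {set E}, A \subset B -> indep B -> indep A) &
      (forall A B : {set E}, indep A -> indep B -> #|A| < #|B| ->
         exists2 x, x \in B :\: A & indep (x |: A))].

Definition is_basis (E : finType) (indep : pred {set E}) (B : {set E}) : bool :=
  indep B && [forall x, (x \notin B) ==> ~~ indep (x |: B)].

Definition mrank (E : finType) (indep : pred {set E}) : nat :=
  \max_(A : {set E} | indep A) #|A|.

Definition table (E : finType) (f n : nat) := 'I_f -> 'I_n -> option E.

Definition row_set (E : finType) (f n : nat) (T : table E f n) (i : 'I_f) : {set E} :=
  [set e | [exists j, T i j == Some e]].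

Definition col_set (E : finType) (f n : nat) (T : table E f n) (j : 'I_n) : {set E} :=
  [set e | [exists i, T i j == Some e]].

Definition valid_table (E : finType) (indep : pred {set E}) (f n : nat)
    (B : 'I_f -> 'I_n -> {set E}) (T : table E f n) : Prop :=
  [/\ (forall i j e, T i j = Some e -> e \in B i j),
      (forall i, indep (row_set T i)) &
      (forall j, indep (col_set T j))].

From mathcomp Require Import all_boot zify.
Set Implicit Arguments. Unset Strict Implicit. Unset Printing Implicit Defensive.

(* The rows are treated one at a time, keeping the holes already placed in other
   rows in pairwise distinct columns.  A row that is not a basis has fewer than [n]
   elements, hence an empty cell [c].  If all its cells outside the set [U] of the
   at most [f - 1] columns reserved by the other rows are full, choose [x] in
   [B i c] extending both column [c] (at most [f] elements) and the part [W] of the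
   row lying in [U] (at most [f - 1] elements); as [2 f <= n = |B i c|] such an [x]
   exists.  Exchanging [x] into the row at [c] drops one row element outside [W],
   which leaves a hole outside [U] and keeps the row size. *)

Section Matroid.

Variables (E : finType) (indep : pred {set E}).
Implicit Types A B C S W : {set E}.

Lemma indep_card_le_rank A : indep A -> #|A| <= mrank indep.
Proof. exact: (@leq_bigmax_cond _ indep (fun A => #|A|) A). Qed.

Lemma indep_card_rank_basis A : indep A -> #|A| = mrank indep -> is_basis indep A.
Proof.
move=> hA hcard; rewrite /is_basis hA; apply/forallP => x; apply/implyP => hx.
apply/negP => /indep_card_le_rank; by rewrite cardsU1 hx hcard ltnn.
Qed.

Hypothesis hM : is_matroid indep.

Lemma indep_sub A B : A \subset B -> indep B -> indep A.
Proof. by case: hM => _ + _; apply. Qed.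

Lemma indep_aug A B : indep A -> indep B -> #|A| < #|B| ->
  exists2 x, x \in B :\: A & indep (x |: A).
Proof. by case: hM => _ _; apply. Qed.

Lemma exists_indep_rank : exists2 A, indep A & #|A| = mrank indep.
Proof.
case: hM => h0 _ _.
have : 0 < #|[pred A : {set E} | indep A]| by apply/card_gt0P; exists set0.
by move/(eq_bigmax_cond (fun A : {set E} => #|A|)) => [A hA heq]; exists A.
Qed.

Lemma basis_card B : is_basis indep B -> #|B| = mrank indep.
Proof.
move=> /andP[hB /forallP hmax]; apply/eqP; rewrite eqn_leq indep_card_le_rank //=.
have [A hA <-] := exists_indep_rank; rewrite leqNgt; apply/negP => hlt.
have [x /setDP[_ hxB] hx] := indep_aug hB hA hlt.
by move: (hmax x); rewrite hxB /= hx.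
Qed.

Lemma card_nonextending Bs A : indep Bs -> indep A ->
  #|[set y in Bs | ~~ indep (y |: A)]| <= #|A|.
Proof.
move=> hB hA; set D := [set y in Bs | _].
have hD : indep D by apply: indep_sub hB; apply/subsetP => y; rewrite inE => /andP[].
rewrite leqNgt; apply/negP => /(indep_aug hA hD)[x /setDP[hxD _] hx].
by move: hxD; rewrite inE hx andbF.
Qed.

(* Each of [C] and [W] blocks at most its own size of the basis elements. *)
Lemma exists_common_extension Bs C W : is_basis indep Bs -> indep C -> indep W ->
  #|C| + #|W| < mrank indep -> exists2 x, x \in Bs & indep (x |: C) && indep (x |: W).
Proof.
move=> hBs hC hW hlt; have hBi : indep Bs by case/andP: hBs.
set badC := [set y in Bs | ~~ indep (y |: C)].
set badW := [set y in Bs | ~~ indep (y |: W)].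
have : ~~ (Bs \subset badC :|: badW).
  apply/negP => /subset_leq_card; rewrite (basis_card hBs) => hle.
  have := leq_trans hle (leq_card_setU badC badW).
  by rewrite leqNgt (leq_ltn_trans (leq_add (card_nonextending hBi hC)
                                            (card_nonextending hBi hW)) hlt).
move/subsetPn => [x hx]; rewrite !inE hx negb_or !negbK; by exists x.
Qed.

Lemma indep_augment A S : indep A -> indep S -> #|A| <= #|S| ->
  exists I : {set E}, [/\ indep I, A \subset I, I \subset A :|: S & #|I| = #|S|].
Proof.
move: {2}(#|S| - #|A|) (erefl (#|S| - #|A|)) => k.
elim: k A => [|k IH] A hk hA hS hle.
  exists A; split => //; first exact: subsetUl.
  by apply/eqP; rewrite eqn_leq hle -subn_eq0 hk.
have hlt : #|A| < #|S| by rewrite -subn_gt0 hk.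
have [x /setDP[hxS hxA] hx] := indep_aug hA hS hlt.
have hc : #|x |: A| = #|A|.+1 by rewrite cardsU1 hxA.
have hk' : #|S| - #|x |: A| = k by rewrite hc subnS hk.
have hle' : #|x |: A| <= #|S| by rewrite hc.
have [I [hI hAI hIS hIc]] := IH (x |: A) hk' hx hS hle'.
exists I; split => //; first exact: subset_trans (subsetUr _ _) hAI.
apply: (subset_trans hIS); apply/subsetP => y; rewrite !inE.
by case/orP => [/orP[/eqP->|->]|->]; rewrite ?hxS ?orbT.
Qed.

Lemma indep_exchange S W x : indep S -> W \proper S -> x \notin S -> indep (x |: W) ->
  exists2 d, d \in S :\: W & indep (x |: (S :\ d)).
Proof.
move=> hS hWS hxS hxW; have sWS := proper_sub hWS.
have hxW' : x \notin W by apply: contra hxS; apply: (subsetP sWS).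
have [|I [hI hxWI hIS hIc]] := indep_augment hxW hS; first by rewrite cardsU1 hxW' proper_card.
have hxI : x \in I by apply: (subsetP hxWI); rewrite setU11.
have sIxS : I \subset x |: S.
  by apply: subset_trans hIS _; rewrite subUset subsetUr setUS.
have [d hdS hdI] : exists2 d, d \in S & d \notin I.
  apply/subsetPn; apply/negP => hSI.
  have /subset_leq_card : x |: S \subset I by rewrite subUset sub1set hxI.
  by rewrite cardsU1 hxS hIc ltnn.
have hdW : d \notin W by apply: contra hdI => hdW; apply: (subsetP hxWI); rewrite setU1r.
exists d; first by rewrite inE hdW.
suff -> : x |: (S :\ d) = I by [].
apply/eqP; rewrite eq_sym eqEcard hIc cardsU1 in_setD1 (negbTE hxS) andbF /=.
rewrite (cardsD1 d S) hdS add1n leqnn andbT.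
apply/subsetP => y hy; have := subsetP sIxS y hy; rewrite !inE.
by case/orP => [-> //|->]; rewrite andbT orbC; case: eqP hy => // ->; rewrite (negbTE hdI).
Qed.

End Matroid.

Section Tables.

Variables (E : finType) (f n : nat).
Implicit Types (T : table E f n) (i : 'I_f) (j : 'I_n).

Lemma card_Some_image (I : finType) (g : I -> option E) (A : {pred I}) :
  #|[set e | [exists i in A, g i == Some e]]| <= #|A|.
Proof.
apply: (@leq_trans #|pmap g (enum A)|).
  apply: subset_leq_card; apply/subsetP => e; rewrite inE mem_pmap.
  by case/existsP=> i /andP[iA /eqP <-]; apply: map_f; rewrite mem_enum.
by rewrite (leq_trans (card_size _)) // size_pmap cardE count_size.
Qed.

Lemma card_col_set T j : #|col_set T j| <= f.
Proof.
rewrite -[X in _ <= X]card_ord -cardsT (leq_trans _ (card_Some_image (T ^~ j) _)) //.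
by apply: subset_leq_card; apply/subsetP => e; rewrite !inE => /existsP[i hi];
  apply/existsP; exists i; rewrite inE.
Qed.

Lemma exists_notin_ord (U : {set 'I_n}) : #|U| < n -> exists j, j \notin U.
Proof.
move=> hU; have : 0 < #|~: U| by rewrite -(ltn_add2l #|U|) addn0 cardsC card_ord.
by case/card_gt0P => j; rewrite inE; exists j.
Qed.

Lemma eq_row_set T T' i : T' i =1 T i -> row_set T' i = row_set T i.
Proof.
by move=> h; apply/setP => e; rewrite !inE; apply: eq_existsb => j; rewrite h.
Qed.

Lemma eq_col_set T T' j : T' ^~ j =1 T ^~ j -> col_set T' j = col_set T j.
Proof.
by move=> h; apply/setP => e; rewrite !inE; apply: eq_existsb => i; rewrite h.
Qed.

Definition set_cell T i j (v : option E) : table E f n :=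
  fun i' j' => if (i' == i) && (j' == j) then v else T i' j'.

Lemma set_cell_other_row T i j v i' : i' != i -> set_cell T i j v i' =1 T i'.
Proof. by move=> hi j'; rewrite /set_cell (negbTE hi). Qed.

Lemma set_cell_other_col T i j v j' : j' != j -> set_cell T i j v ^~ j' =1 T ^~ j'.
Proof. by move=> hj i'; rewrite /set_cell (negbTE hj) andbF. Qed.

Lemma row_set_clear_sub T i j i' : row_set (set_cell T i j None) i' \subset row_set T i'.
Proof.
apply/subsetP => e; rewrite !inE => /existsP[j' h]; apply/existsP; exists j'.
by move: h; rewrite /set_cell; case: ifP.
Qed.

Lemma col_set_clear_sub T i j j' : col_set (set_cell T i j None) j' \subset col_set T j'.
Proof.
apply/subsetP => e; rewrite !inE => /existsP[i' h]; apply/existsP; exists i'.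
by move: h; rewrite /set_cell; case: ifP.
Qed.

Lemma row_set_clear T i j d : T i j = Some d -> (forall j', T i j' = Some d -> j' = j) ->
  row_set (set_cell T i j None) i = row_set T i :\ d.
Proof.
move=> hd huniq; apply/setP => e; rewrite !inE /set_cell eqxx /=.
apply/existsP/andP => [[j' h]|[hed /existsP[j' h]]].
  case: (eqVneq j' j) h => // hj' /eqP h.
  split; last by apply/existsP; exists j'; rewrite h.
  by apply: contra_neq hj' => he; apply: huniq; rewrite h he.
exists j'; case: (eqVneq j' j) => // hj'.
by move: h; rewrite hj' hd => /eqP[hde]; rewrite hde eqxx in hed.
Qed.

Lemma row_set_fill T i j x : T i j = None ->
  row_set (set_cell T i j (Some x)) i = x |: row_set T i.
Proof.
move=> hj; apply/setP => e; rewrite !inE /set_cell eqxx /=.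
apply/existsP/orP => [[j' h]|[/eqP->|/existsP[j' h]]].
- case: (eqVneq j' j) h => _ h; first by left; rewrite eq_sym.
  by right; apply/existsP; exists j'.
- by exists j; rewrite eqxx.
- by exists j'; case: (eqVneq j' j) h => [->|//]; rewrite hj.
Qed.

Lemma col_set_fill_sub T i j x :
  col_set (set_cell T i j (Some x)) j \subset x |: col_set T j.
Proof.
apply/subsetP => e; rewrite !inE /set_cell eqxx => /existsP[i' h].
case: (eqVneq i' i) h => _ /= h; first by case/eqP: h => ->; rewrite eqxx.
by apply/orP; right; apply/existsP; exists i'.
Qed.

End Tables.

Section ValidTables.

Variables (E : finType) (indep : pred {set E}) (f n : nat) (B : 'I_f -> 'I_n -> {set E}).
Implicit Types (T : table E f n) (i : 'I_f) (j : 'I_n).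

Hypothesis hM : is_matroid indep.
Hypothesis hdisj : forall i j i' j', (i, j) != (i', j') -> [disjoint B i j & B i' j'].

Local Notation valid := (valid_table indep B).

Lemma block_mem_inj i j i' j' e : e \in B i j -> e \in B i' j' -> (i, j) = (i', j').
Proof.
move=> he he'; apply/eqP; apply: contraT => hne.
by rewrite (disjointFr (hdisj hne) he) in he'.
Qed.

Lemma valid_cell_inj T i j i' j' e :
  valid T -> T i j = Some e -> T i' j' = Some e -> (i, j) = (i', j').
Proof. by case=> hTB _ _ h h'; apply: block_mem_inj (hTB _ _ _ h) (hTB _ _ _ h'). Qed.

Lemma row_has_hole T i : valid T -> #|row_set T i| < n -> exists c, T i c = None.
Proof.
move=> hv hlt; case: (pickP (fun c => T i c == None)) => [c /eqP|hfull]; first by exists c.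
pose j0 : 'I_n := Ordinal (leq_ltn_trans (leq0n _) hlt).
case: (T i j0) (hfull j0) => [e0|] // _.
pose g j := odflt e0 (T i j).
have ginj : injective g.
  move=> j j'; rewrite /g; case h: (T i j) (hfull j) => [e|] // _.
  case h': (T i j') (hfull j') => [e'|] // _ /= hee'; rewrite -hee' in h'.
  by case: (valid_cell_inj hv h h').
have : g @: [set: 'I_n] \subset row_set T i.
  apply/subsetP => e /imsetP[j _ ->]; rewrite inE /g.
  by case h: (T i j) (hfull j) => [e'|] // _; apply/existsP; exists j; rewrite h.
by move/subset_leq_card; rewrite card_imset // cardsT card_ord leqNgt hlt.
Qed.

Lemma valid_clear T i j : valid T -> valid (set_cell T i j None).
Proof.
case=> hTB hrow hcol; split => [i' j' e|i'|j'].
- by rewrite /set_cell; case: ifP => // _; apply: hTB.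
- by apply: (indep_sub hM _ (hrow i')); apply: row_set_clear_sub.
- by apply: (indep_sub hM _ (hcol j')); apply: col_set_clear_sub.
Qed.

Lemma valid_fill T i j x : valid T -> T i j = None -> x \in B i j ->
  indep (x |: row_set T i) -> indep (x |: col_set T j) -> valid (set_cell T i j (Some x)).
Proof.
move=> [hTB hrow hcol] hij hx hxrow hxcol; split => [i' j' e|i'|j'].
- by rewrite /set_cell; case: ifP => [/andP[/eqP-> /eqP->] [<-] //|_]; apply: hTB.
- case: (eqVneq i' i) => [->|hi]; first by rewrite row_set_fill.
  by rewrite (eq_row_set (set_cell_other_row _ _ _ hi)).
- case: (eqVneq j' j) => [->|hj]; first by apply: (indep_sub hM _ hxcol); apply: col_set_fill_sub.
  by rewrite (eq_col_set (set_cell_other_col _ _ _ hj)).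
Qed.

Lemma valid_move_hole T i0 c j0 d x :
  valid T -> T i0 c = None -> T i0 j0 = Some d -> x \in B i0 c -> x \notin row_set T i0 ->
  indep (x |: (row_set T i0 :\ d)) -> indep (x |: col_set T c) ->
  exists T' : table E f n, [/\ valid T', T' i0 j0 = None,
    #|row_set T' i0| = #|row_set T i0| & forall i, i != i0 -> T' i =1 T i].
Proof.
move=> hv hc hd hxB hxS hxrow hxcol.
have hcj0 : c != j0 by apply: contra_eq_neq hc => ->; rewrite hd.
pose T1 := set_cell T i0 j0 None.
have hT1c : T1 ^~ c =1 T ^~ c := set_cell_other_col _ _ _ hcj0.
have hrow1 : row_set T1 i0 = row_set T i0 :\ d.
  by apply: row_set_clear => // j' hj'; case: (valid_cell_inj hv hj' hd).
exists (set_cell T1 i0 c (Some x)); split.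
- apply: valid_fill; rewrite ?hT1c ?hrow1 ?(eq_col_set hT1c) //.
  exact: valid_clear.
- by rewrite set_cell_other_col 1?eq_sym // /T1 /set_cell !eqxx.
- have hdS : d \in row_set T i0 by rewrite inE; apply/existsP; exists j0; rewrite hd.
  rewrite row_set_fill ?hT1c // hrow1 cardsU1 in_setD1 (negbTE hxS) andbF.
  by rewrite (cardsD1 d (row_set T i0)) hdS.
- by move=> i hi j; rewrite /T1 /set_cell (negbTE hi).
Qed.

End ValidTables.

Section Holes.

Variables (E : finType) (indep : pred {set E}) (f n : nat) (B : 'I_f -> 'I_n -> {set E}).
Implicit Types (T : table E f n) (i : 'I_f) (j : 'I_n).

Hypothesis hM : is_matroid indep.
Hypothesis hrank : mrank indep = n.
Hypothesis hB : forall i j, is_basis indep (B i j).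
Hypothesis hdisj : forall i j i' j', (i, j) != (i', j') -> [disjoint B i j & B i' j'].

Local Notation valid := (valid_table indep B).

Lemma move_hole_outside T i0 c (U : {set 'I_n}) :
  valid T -> T i0 c = None -> (forall j, j \notin U -> T i0 j != None) -> f + #|U| < n ->
  exists T' j0, [/\ valid T', j0 \notin U, T' i0 j0 = None,
    #|row_set T' i0| = #|row_set T i0| & forall i, i != i0 -> T' i =1 T i].
Proof.
move=> hv hc hfull hfU; have [hTB hrow hcol] := hv.
set S := row_set T i0; set W := [set e | [exists j in U, T i0 j == Some e]].
have sWS : W \subset S.
  by apply/subsetP => e; rewrite !inE => /existsP[j /andP[_ h]]; apply/existsP; exists j.
have [x hxB /andP[hxC hxW]] :
    exists2 x, x \in B i0 c & indep (x |: col_set T c) && indep (x |: W).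
  apply: exists_common_extension => //; first exact: (indep_sub hM sWS (hrow i0)).
  by rewrite hrank (leq_ltn_trans _ hfU) // leq_add ?card_col_set ?card_Some_image.
have hxS : x \notin S.
  apply/negP; rewrite inE => /existsP[j /eqP hj].
  by case: (block_mem_inj hdisj (hTB _ _ _ hj) hxB) => hjc; rewrite hjc hc in hj.
have hWS : W \proper S.
  have [j1 hj1] := exists_notin_ord (leq_ltn_trans (leq_addl f #|U|) hfU).
  case h1 : (T i0 j1) (hfull j1 hj1) => [e1|] // _.
  rewrite properE sWS; apply/subsetPn; exists e1.
    by rewrite inE; apply/existsP; exists j1; rewrite h1.
  rewrite inE; apply/existsP => -[j /andP[hjU /eqP hj]].
  by case: (valid_cell_inj hdisj hv hj h1) => hjj; rewrite -hjj hjU in hj1.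
have [d /setDP[hdS hdW] hxd] := indep_exchange hM (hrow i0) hWS hxS hxW.
have [j0 /eqP hj0] : exists j0, T i0 j0 == Some d by move: hdS; rewrite inE => /existsP.
have [T' [hv' hT'j0 hcard hother]] := valid_move_hole hM hdisj hv hc hj0 hxB hxS hxd hxC.
exists T', j0; split => //.
by apply: contra hdW => hj0U; rewrite inE; apply/existsP; exists j0; rewrite hj0U hj0 /=.
Qed.

Lemma extend_holes T (b : 'I_f -> 'I_n) i0 : 2 * f <= n -> valid T ->
  exists T' j, [/\ valid T', forall i, i != i0 -> T' i =1 T i,
    #|row_set T' i0| = #|row_set T i0|, j \notin b @: [set~ i0]
    & #|row_set T' i0| < n -> T' i0 j = None].
Proof.
move=> h2f hv; set U := b @: [set~ i0].
have hfU : f + #|U| < n.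
  have : #|U| <= f.-1 by rewrite (leq_trans (leq_imset_card _ _)) // cardsC1 card_ord.
  by have := ltn_ord i0; lia.
have [hfullrow | hlt] := leqP n #|row_set T i0|.
  have [j hj] := exists_notin_ord (leq_ltn_trans (leq_addl f #|U|) hfU).
  by exists T, j; split => //; rewrite ltnNge hfullrow.
case: (pickP [pred j | (j \notin U) && (T i0 j == None)]) => [j /andP[hjU /eqP hj]|hnone].
  by exists T, j.
have [c hc] := row_has_hole hdisj hv hlt.
have hfull j : j \notin U -> T i0 j != None by move=> hj; move: (hnone j); rewrite /= hj => /negbT.
have [T' [j0 [hv' hj0U hj0 hcard hother]]] := move_hole_outside hv hc hfull hfU.
by exists T', j0.
Qed.

Lemma fill_holes T k : 2 * f <= n -> valid T -> k <= f ->
  exists T' (b : 'I_f -> 'I_n), [/\ valid T', forall i, #|row_set T' i| = #|row_set T i|,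
    {in [pred i : 'I_f | i < k] &, injective b}
    & forall i, i < k -> #|row_set T' i| < n -> T' i (b i) = None].
Proof.
move=> h2f hv; elim: k => [|k IH] hk.
  have hfn : f <= n by lia.
  by exists T, (widen_ord hfn).
have [T1 [b1 [hv1 hs1 hinj1 hh1]]] := IH (ltnW hk).
pose i0 : 'I_f := Ordinal hk.
have [T' [j [hv' hother hs' hjU hj]]] := extend_holes b1 i0 h2f hv1.
have ltk i : i < k.+1 -> i != i0 -> i < k.
  by rewrite ltnS leq_eqVlt => /orP[/eqP hik|//]; case/eqP; apply: val_inj.
have hb1U i : i != i0 -> b1 i \in b1 @: [set~ i0] by move=> hi; rewrite imset_f // !inE.
exists T', (fun i => if i == i0 then j else b1 i); split => //.
- move=> i; case: (eqVneq i i0) => [->|hi]; first by rewrite hs' hs1.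
  by rewrite (eq_row_set (hother i hi)) hs1.
- move=> i i'; rewrite !inE => hi hi'.
  case: (eqVneq i i0) => [->|hne]; case: (eqVneq i' i0) => [->|hne'] // hb.
  + by move: hjU; rewrite hb hb1U.
  + by move: hjU; rewrite -hb hb1U.
  + by apply: hinj1; rewrite ?inE ?ltk.
- move=> i hi; case: (eqVneq i i0) => [->|hne]; first exact: hj.
  by rewrite (eq_row_set (hother i hne)) (hother i hne); apply: hh1; rewrite ltk.
Qed.

End Holes.

Theorem mainTheorem7 (E : finType) (indep : pred {set E}) (n f : nat)
  (B : 'I_f -> 'I_n -> {set E}) (T : table E f n) :
  is_matroid indep ->
  mrank indep = n ->
  0 < f -> f <= n -> 2 * f <= n ->
  (forall i j, is_basis indep (B i j)) ->
  (forall i j i' j', (i, j) != (i', j') -> [disjoint B i j & B i' j']) ->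
  valid_table indep B T ->
  exists T' : table E f n,
    [/\ valid_table indep B T',
        (forall i, #|row_set T' i| = #|row_set T i|) &
        exists b : 'I_f -> 'I_n,
          injective b /\
          (forall i, ~~ is_basis indep (row_set T' i) -> T' i (b i) = None)].
Proof.
move=> hM hrank _ _ h2f hB hdisj hv.
have [T' [b [hv' hsize hinj hhole]]] := fill_holes hM hrank hB hdisj h2f hv (leqnn f).
have [_ hrow _] := hv'.
exists T'; split => //; exists b; split => [i i' hb|i hnb].
  by apply: hinj; rewrite ?inE.
apply: hhole => //; have := indep_card_le_rank (hrow i).
rewrite hrank leq_eqVlt => /orP[/eqP hfull|//].
by case/negP: hnb; apply: indep_card_rank_basis; rewrite ?hrank.
Qed.
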